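(* Let $(X,d,f)$ be a dynamical system and $\mathcal{A}=\{\mathcal{U}_n\}_{n\in\mathbb{N}}$ a defining sequence of $X$, and let $\theta:X\to\varprojlim(\hookrightarrow,\mathcal{O}(\mathcal{U}_n))$ be given by $\theta(x)=\big((\mathcal{U}_n[f^i(x)])_{i\in\mathbb{N}}\big)_{n\in\mathbb{N}}$. (i) If $\mathcal{A}$ is complete, then $\theta$ is a homeomorphism onto $\varprojlim(\hookrightarrow,\mathcal{O}(\mathcal{U}_n))$. (ii) If $\mathcal{A}$ is complete and tame, then $f$ is uniformly continuous if and only if $\theta$ and $\theta^{-1}$ are uniformly continuous.
   Context: Spaces are nonempty separable metrizable; $d$ admissible, $f$ continuous. A partition is a cover by pairwise disjoint nonempty clopen sets; $\mathcal{U}[x]$ is the element containing $x$. A defining sequence is a sequence of partitions, each refining the previous, whose union is a basis; complete if nested $U_n\in\mathcal{U}_n$ have nonempty intersection; tame if $\sup\{\operatorname{diam}O:O\in\mathcal{U}_n\}\to0$ and each $\mathcal{U}_n$ is $\rho_n$-separated for some $\rho_n>0$. $\mathcal{O}(\mathcal{U})=\{(O_i)\in\mathcal{U}^{\mathbb{N}}:\forall k\ \exists x,\ f^i(x)\in O_i\ (0\le i\le k)\}$ with metric $1/(i+1)$ ($i$ least index of disagreement, $\mathcal{U}$ discrete). $\hookrightarrow:\mathcal{O}(\mathcal{U}_{n+1})\to\mathcal{O}(\mathcal{U}_n)$ sends $(O_i)$ to the unique $(V_i)\in\mathcal{U}_n^{\mathbb{N}}$ with $O_i\subseteq V_i$;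 the inverse limit is $\{(y_n)\in\prod_n\mathcal{O}(\mathcal{U}_n):y_n=\hookrightarrow(y_{n+1})\}$ with metric $d_\Pi((y_n),(z_n))=\max_n d(y_n,z_n)/(n+1)$. *)

From Stdlib Require Import Reals ClassicalEpsilon.
From Coquelicot Require Import Coquelicot.
Open Scope R_scope.

Section Defs.
Context {X : Type}.
Implicit Types (d : X -> X -> R) (A B : X -> Prop).

Definition is_metric d : Prop :=
  (forall x y, 0 <= d x y) /\ (forall x y, d x y = 0 <-> x = y) /\
  (forall x y, d x y = d y x) /\ (forall x y z, d x z <= d x y + d y z).

Definition mopen d A : Prop :=
  forall x, A x -> exists e, 0 < e /\ forall y, d x y < e -> A y.
Definition mclosed d A : Prop := mopen d (fun x => ~ A x).
Definition clopen d A : Prop := mopen d A /\ mclosed d A.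

Definition separable d : Prop :=
  exists s : nat -> X, forall x e, 0 < e -> exists n, d x (s n) < e.

Definition mcontinuous d (f : X -> X) : Prop :=
  forall x e, 0 < e -> exists dl, 0 < dl /\ forall y, d x y < dl -> d (f x) (f y) < e.

Definition unif_continuous d (f : X -> X) : Prop :=
  forall e, 0 < e -> exists dl, 0 < dl /\ forall x y, d x y < dl -> d (f x) (f y) < e.

Definition subset A B : Prop := forall x, A x -> B x.

Definition partition d (U : (X -> Prop) -> Prop) : Prop :=
  (forall O, U O -> (exists x, O x) /\ clopen d O) /\
  (forall O O', U O -> U O' -> O <> O' -> forall x, ~ (O x /\ O' x)) /\
  (forall x, exists O, U O /\ O x).

(* U[x] : the element of U containing x *)
Definition cell (U : (X -> Prop) -> Prop) (x : X) : X -> Prop :=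
  fun y => exists O, U O /\ O x /\ O y.

Definition refines (V U : (X -> Prop) -> Prop) : Prop :=
  forall O, V O -> exists O', U O' /\ subset O O'.

Definition is_basis d (B : (X -> Prop) -> Prop) : Prop :=
  (forall O, B O -> mopen d O) /\
  (forall W x, mopen d W -> W x -> exists O, B O /\ O x /\ subset O W).

Definition defining_sequence d (P : nat -> (X -> Prop) -> Prop) : Prop :=
  (forall n, partition d (P n)) /\
  (forall n, refines (P (S n)) (P n)) /\
  is_basis d (fun O => exists n, P n O).

Definition complete_seq (P : nat -> (X -> Prop) -> Prop) : Prop :=
  forall Us : nat -> X -> Prop, (forall n, P n (Us n)) ->
    (forall n, subset (Us (S n)) (Us n)) -> exists x, forall n, Us n x.

Definition tame d (P : nat -> (X -> Prop) -> Prop) : Prop :=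
  (forall e, 0 < e -> exists N, forall n, (N <= n)%nat ->
      forall O, P n O -> forall x y, O x -> O y -> d x y <= e) /\
  (forall n, exists rho, 0 < rho /\ forall O O', P n O -> P n O' -> O <> O' ->
      forall x y, O x -> O' y -> rho <= d x y).

Definition orbit_space (f : X -> X) (U : (X -> Prop) -> Prop)
  (s : nat -> X -> Prop) : Prop :=
  (forall i, U (s i)) /\
  (forall k, exists x, forall i, (i <= k)%nat -> s i (Nat.iter i f x)).

(* metric on O(U): 1/(i+1), i least index of disagreement; 0 if equal *)
Definition first_diff (s t : nat -> X -> Prop) (i : nat) : Prop :=
  s i <> t i /\ forall j, (j < i)%nat -> s j = t j.

Definition dO (s t : nat -> X -> Prop) : R :=
  match excluded_middle_informative (exists i, first_diff s t i) with
  | left H => / (INR (proj1_sig (constructive_indefinite_description _ H)) + 1)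
  | right _ => 0
  end.

(* y_n = hook(y_{n+1}) : y_n i is the element of U_n containing y_{n+1} i *)
Definition hook_rel (Un : (X -> Prop) -> Prop) (yn yn1 : nat -> X -> Prop) : Prop :=
  forall i, Un (yn i) /\ subset (yn1 i) (yn i).

Definition inv_limit (f : X -> X) (P : nat -> (X -> Prop) -> Prop)
  (y : nat -> nat -> X -> Prop) : Prop :=
  (forall n, orbit_space f (P n) (y n)) /\
  (forall n, hook_rel (P n) (y n) (y (S n))).

(* d_Pi(y,z) = max_n dO(y_n,z_n)/(n+1), written as a supremum (it is attained) *)
Definition dPi (y z : nat -> nat -> X -> Prop) : R :=
  real (Sup_seq (fun n => Finite (dO (y n) (z n) / (INR n + 1)))).

Definition theta (f : X -> X) (P : nat -> (X -> Prop) -> Prop) (x : X)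
  : nat -> nat -> X -> Prop :=
  fun n i => cell (P n) (Nat.iter i f x).

End Defs.

From Stdlib Require Import Reals.
From Coquelicot Require Import Coquelicot.
From Stdlib Require Import Arith Lra Lia Classical FunctionalExtensionality PropExtensionality ClassicalEpsilon.
Open Scope R_scope.

(* theta x records, at every resolution n, the itinerary of x through the cells of U_n.
   Cells are clopen and the U_n together form a basis, so x is recovered from the time-0
   coordinates (injectivity, continuity of theta^-1), while continuity of the iterates f^i
   makes finitely many coordinates of theta locally constant (continuity of theta).
   Completeness supplies a point for every coherent family of itineraries.  Under tameness,
   small diameters and rho_n-separation make both moduli uniform; conversely
   f = theta^-1 o shift o theta, and the shift at most doubles d_Pi. *)

Section Cells.
Context {X : Type} {d : X -> X -> R} {U : (X -> Prop) -> Prop} (HU : partition d U).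

Lemma partition_cell_unique O O' x : U O -> U O' -> O x -> O' x -> O = O'.
Proof.
  intros HO HO' Hx Hx'. destruct (classic (O = O')) as [E|E]; auto.
  exfalso. exact (proj1 (proj2 HU) O O' HO HO' E x (conj Hx Hx')).
Qed.

Lemma cell_eq O x : U O -> O x -> cell U x = O.
Proof.
  intros HO Hx. apply functional_extensionality; intro y.
  apply propositional_extensionality. split.
  - intros [O' [HO' [Hx' Hy]]].
    rewrite (partition_cell_unique O O' x HO HO' Hx Hx'). exact Hy.
  - intro Hy. exists O; auto.
Qed.

Lemma cell_in x : U (cell U x).
Proof.
  destruct (proj2 (proj2 HU) x) as [O [HO Hx]]. rewrite (cell_eq O x HO Hx). exact HO.
Qed.

Lemma cell_self x : cell U x x.
Proof.
  destruct (proj2 (proj2 HU) x) as [O [HO Hx]]. rewrite (cell_eq O x HO Hx). exact Hx.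
Qed.

Lemma cell_eq_of_mem x y : cell U x y -> cell U y = cell U x.
Proof. apply cell_eq, cell_in. Qed.

Lemma cell_comp_locally_constant g : mcontinuous d g ->
  forall x, exists dl, 0 < dl /\ forall x', d x x' < dl -> cell U (g x') = cell U (g x).
Proof.
  intros Hg x.
  destruct (proj1 (proj2 (proj1 HU _ (cell_in (g x)))) (g x) (cell_self (g x)))
    as [e [He Hball]].
  destruct (Hg x e He) as [dl [Hdl Hcont]].
  exists dl; split; auto.
  intros x' Hx'. apply cell_eq_of_mem, Hball, Hcont, Hx'.
Qed.

Lemma cell_comp_unif_locally_constant g rho : 0 < rho ->
  (forall O O', U O -> U O' -> O <> O' -> forall x y, O x -> O' y -> rho <= d x y) ->
  unif_continuous d g ->
  exists dl, 0 < dl /\ forall x x', d x x' < dl -> cell U (g x') = cell U (g x).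
Proof.
  intros Hrho Hsep Hg. destruct (Hg rho Hrho) as [dl [Hdl Hcont]].
  exists dl; split; auto. intros x x' Hx'.
  destruct (classic (cell U (g x') = cell U (g x))) as [E|E]; auto. exfalso.
  pose proof (Hsep _ _ (cell_in (g x)) (cell_in (g x')) (not_eq_sym E) _ _
                (cell_self (g x)) (cell_self (g x'))).
  pose proof (Hcont x x' Hx'). lra.
Qed.

End Cells.

Lemma iter_continuous {X} (d : X -> X -> R) f :
  mcontinuous d f -> forall i, mcontinuous d (Nat.iter i f).
Proof.
  intros Hf i. induction i as [|i IH]; intros x e He.
  - exists e; auto.
  - destruct (Hf (Nat.iter i f x) e He) as [d1 [Hd1 H1]].
    destruct (IH x d1 Hd1) as [d2 [Hd2 H2]].
    exists d2; split; auto. intros y Hy. apply H1, H2, Hy.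
Qed.

Lemma iter_unif_continuous {X} (d : X -> X -> R) f :
  unif_continuous d f -> forall i, unif_continuous d (Nat.iter i f).
Proof.
  intros Hf i. induction i as [|i IH]; intros e He.
  - exists e; auto.
  - destruct (Hf e He) as [d1 [Hd1 H1]].
    destruct (IH d1 Hd1) as [d2 [Hd2 H2]].
    exists d2; split; auto. intros x y Hxy. apply H1, H2, Hxy.
Qed.

Lemma exists_pos_forall_le (Q : nat -> R -> Prop) K :
  (forall j a b, 0 < b <= a -> Q j a -> Q j b) ->
  (forall j, (j <= K)%nat -> exists a, 0 < a /\ Q j a) ->
  exists a, 0 < a /\ forall j, (j <= K)%nat -> Q j a.
Proof.
  intros Hmono. induction K as [|K IH]; intros Hex.
  - destruct (Hex 0%nat (le_n 0)) as [a [Ha HQ]].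
    exists a; split; auto. intros j Hj. replace j with 0%nat by lia. exact HQ.
  - destruct IH as [a [Ha HQa]]; [intros j Hj; apply Hex; lia|].
    destruct (Hex (S K) (le_n _)) as [b [Hb HQb]].
    assert (Hmin : 0 < Rmin a b) by (apply Rmin_pos; auto).
    exists (Rmin a b); split; auto. intros j Hj.
    destruct (Nat.eq_dec j (S K)) as [->|Hne].
    + apply Hmono with b; auto. split; [exact Hmin | apply Rmin_r].
    + apply Hmono with a; [split; [exact Hmin | apply Rmin_l] | apply HQa; lia].
Qed.

Lemma exists_pos_forall_le2 (Q : nat -> nat -> R -> Prop) K :
  (forall n i a b, 0 < b <= a -> Q n i a -> Q n i b) ->
  (forall n i, (n <= K)%nat -> (i <= K)%nat -> exists a, 0 < a /\ Q n i a) ->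
  exists a, 0 < a /\ forall n i, (n <= K)%nat -> (i <= K)%nat -> Q n i a.
Proof.
  intros Hmono Hex.
  destruct (exists_pos_forall_le (fun n a => forall i, (i <= K)%nat -> Q n i a) K)
    as [a [Ha HQ]].
  - intros n a b Hab HQ i Hi. apply Hmono with a; auto.
  - intros n Hn. apply exists_pos_forall_le; auto.
    intros i a b Hab. apply Hmono, Hab.
  - exists a; split; auto.
Qed.

Lemma exists_inv_succ_lt e : 0 < e -> exists K, / (INR K + 1) < e.
Proof.
  intro He. destruct (archimed_cor1 e He) as [K [HK HK0]]. exists K.
  apply lt_0_INR in HK0. apply Rlt_trans with (/ INR K); auto.
  apply Rinv_lt_contravar; nra.
Qed.

Lemma inv_succ_bounds n : 0 < / (INR n + 1) <= 1.
Proof.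
  pose proof (pos_INR n). split.
  - apply Rinv_0_lt_compat; lra.
  - rewrite <- Rinv_1. apply Rinv_le_contravar; lra.
Qed.

Section OrbitMetric.
Context {X : Type}.
Implicit Types s t : nat -> X -> Prop.

Lemma first_diff_unique s t i j : first_diff s t i -> first_diff s t j -> i = j.
Proof.
  intros [Hi Hi'] [Hj Hj']. destruct (lt_eq_lt_dec i j) as [[H|H]|H]; auto.
  - exfalso; apply Hi, Hj', H.
  - exfalso; apply Hj, Hi', H.
Qed.

Lemma first_diff_exists s t n : s n <> t n -> exists i, first_diff s t i.
Proof.
  induction n as [n IH] using lt_wf_ind. intros Hn.
  destruct (classic (forall j, (j < n)%nat -> s j = t j)) as [Hall|Hnot].
  - exists n; split; auto.
  - apply not_all_ex_not in Hnot. destruct Hnot as [j Hj].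
    apply imply_to_and in Hj. destruct Hj as [Hjn Hj]. exact (IH j Hjn Hj).
Qed.

Lemma dO_first_diff s t i : first_diff s t i -> dO s t = / (INR i + 1).
Proof.
  intros H. unfold dO. destruct (excluded_middle_informative _) as [Hex|Hno].
  - destruct (constructive_indefinite_description _ Hex) as [j Hj]. simpl.
    rewrite (first_diff_unique s t j i Hj H). reflexivity.
  - exfalso; apply Hno; eauto.
Qed.

Lemma dO_no_diff s t : ~ (exists i, first_diff s t i) -> dO s t = 0.
Proof.
  intro H. unfold dO. destruct (excluded_middle_informative _); [contradiction | reflexivity].
Qed.

Lemma dO_bounds s t : 0 <= dO s t <= 1.
Proof.
  destruct (classic (exists i, first_diff s t i)) as [[i Hi]|Hno].
  - rewrite (dO_first_diff s t i Hi). pose proof (inv_succ_bounds i). lra.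
  - rewrite (dO_no_diff s t Hno). lra.
Qed.

Lemma dO_le_of_agree s t K :
  (forall j, (j < K)%nat -> s j = t j) -> dO s t <= / (INR K + 1).
Proof.
  intros Hag. pose proof (inv_succ_bounds K).
  destruct (classic (exists i, first_diff s t i)) as [[i Hi]|Hno].
  - rewrite (dO_first_diff s t i Hi).
    assert (HKi : (K <= i)%nat).
    { destruct (le_lt_dec K i) as [Hle|Hgt]; auto. exfalso; apply (proj1 Hi), Hag, Hgt. }
    apply le_INR in HKi. pose proof (pos_INR K). apply Rinv_le_contravar; lra.
  - rewrite (dO_no_diff s t Hno). lra.
Qed.

Lemma dO_lt1_head s t : dO s t < 1 -> s 0%nat = t 0%nat.
Proof.
  intro H. destruct (classic (s 0%nat = t 0%nat)) as [E|E]; auto.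
  rewrite (dO_first_diff s t 0) in H.
  - simpl in H. rewrite Rplus_0_l, Rinv_1 in H. lra.
  - split; auto. intros j Hj. lia.
Qed.

(* if the tails first differ at j, then s and t first differ at some i <= j + 1,
   and 1/(j+1) <= 2/(i+1) *)
Lemma dO_tail s t : dO (fun i => s (S i)) (fun i => t (S i)) <= 2 * dO s t.
Proof.
  destruct (classic (exists j, first_diff (fun i => s (S i)) (fun i => t (S i)) j))
    as [[j Hj]|Hno].
  - rewrite (dO_first_diff _ _ j Hj).
    destruct (first_diff_exists s t (S j) (proj1 Hj)) as [i Hi].
    rewrite (dO_first_diff s t i Hi).
    assert (Hij : (i <= S j)%nat).
    { destruct (le_lt_dec i (S j)) as [H|H]; auto.
      exfalso. apply (proj1 Hj), (proj2 Hi). lia. }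
    apply le_INR in Hij. rewrite S_INR in Hij.
    pose proof (pos_INR i). pose proof (pos_INR j).
    assert (Hi1 : (INR i + 1) * / (INR i + 1) = 1) by (field; lra).
    assert (Hj1 : (INR j + 1) * / (INR j + 1) = 1) by (field; lra).
    pose proof (inv_succ_bounds i). pose proof (inv_succ_bounds j). nra.
  - rewrite (dO_no_diff _ _ Hno). pose proof (dO_bounds s t). lra.
Qed.

End OrbitMetric.

Lemma real_Sup_seq_bounds (u : nat -> R) c : (forall n, 0 <= u n <= c) ->
  (forall n, u n <= real (Sup_seq (fun n => Finite (u n)))) /\
  real (Sup_seq (fun n => Finite (u n))) <= c.
Proof.
  intros Hu.
  assert (Hle : Rbar_le (Sup_seq (fun n => Finite (u n))) c).
  { apply (proj2 (is_sup_seq_lub _ _ (Sup_seq_correct _))).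
    intros _ [n ->]. apply Hu. }
  assert (Hge : forall n, Rbar_le (u n) (Sup_seq (fun n => Finite (u n)))).
  { intro n. exact (is_sup_seq_major (fun n => Finite (u n)) _ n (Sup_seq_correct _)). }
  destruct (Sup_seq (fun n => Finite (u n))) as [s| |]; simpl in *.
  - split; auto.
  - contradiction.
  - exfalso; exact (Hge 0%nat).
Qed.

Section ProductMetric.
Context {X : Type}.
Implicit Types y z : nat -> nat -> X -> Prop.

Lemma dPi_term_bounds y z n : 0 <= dO (y n) (z n) / (INR n + 1) <= 1.
Proof.
  pose proof (dO_bounds (y n) (z n)). pose proof (inv_succ_bounds n).
  unfold Rdiv. split; nra.
Qed.

Lemma dPi_ge_term y z n : dO (y n) (z n) / (INR n + 1) <= dPi y z.
Proof.
  apply (real_Sup_seq_bounds (fun n => dO (y n) (z n) / (INR n + 1)) 1).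
  intro m. apply dPi_term_bounds.
Qed.

Lemma dPi_le_of_terms y z c :
  (forall n, dO (y n) (z n) / (INR n + 1) <= c) -> dPi y z <= c.
Proof.
  intro Hc. apply (real_Sup_seq_bounds (fun n => dO (y n) (z n) / (INR n + 1)) c).
  intro m. split; [apply dPi_term_bounds | apply Hc].
Qed.

Lemma dPi_le_of_agree y z K :
  (forall n i, (n < K)%nat -> (i < K)%nat -> y n i = z n i) -> dPi y z <= / (INR K + 1).
Proof.
  intros Hag. apply dPi_le_of_terms. intro n.
  pose proof (inv_succ_bounds n). pose proof (dO_bounds (y n) (z n)).
  unfold Rdiv. destruct (lt_dec n K) as [Hn|Hn].
  - pose proof (dO_le_of_agree (y n) (z n) K (fun j Hj => Hag n j Hn Hj)). nra.
  - assert (HKn : / (INR n + 1) <= / (INR K + 1)).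
    { assert (K <= n)%nat as HKn by lia. apply le_INR in HKn.
      pose proof (pos_INR K). apply Rinv_le_contravar; lra. }
    nra.
Qed.

Lemma dPi_lt_inv_head y z n : dPi y z < / (INR n + 1) -> y n 0%nat = z n 0%nat.
Proof.
  intro H. apply dO_lt1_head. pose proof (dPi_ge_term y z n). pose proof (inv_succ_bounds n).
  unfold Rdiv in *. nra.
Qed.

End ProductMetric.

Lemma inv_limit_antitone {X} (f : X -> X) P y :
  inv_limit f P y -> forall a b i, (a <= b)%nat -> subset (y b i) (y a i).
Proof.
  intros [_ Hhook] a b i Hab. induction Hab as [|b Hab IH]; intros z Hz; auto.
  apply IH, (proj2 (Hhook b i)), Hz.
Qed.

Section Theta.
Context {X : Type} {d : X -> X -> R} (f : X -> X) {P : nat -> (X -> Prop) -> Prop}.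
Hypothesis Hpart : forall n, partition d (P n).

Lemma theta_inv_limit : (forall n, refines (P (S n)) (P n)) ->
  forall x, inv_limit f P (theta f P x).
Proof.
  intros Href x. unfold theta. split.
  - intro n. split.
    + intro i. apply (cell_in (Hpart n)).
    + intro k. exists x. intros i _. apply (cell_self (Hpart n)).
  - intros n i. split; [apply (cell_in (Hpart n))|].
    destruct (Href n _ (cell_in (Hpart (S n)) (Nat.iter i f x))) as [O [HO Hsub]].
    rewrite (cell_eq (Hpart n) O _ HO (Hsub _ (cell_self (Hpart (S n)) _))).
    exact Hsub.
Qed.

Lemma dPi_theta_shift x x' :
  dPi (theta f P (f x)) (theta f P (f x')) <= 2 * dPi (theta f P x) (theta f P x').
Proof.
  apply dPi_le_of_terms. intro n.
  assert (Hshift : forall w, theta f P (f w) n = fun i => theta f P w n (S i)).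
  { intro w. unfold theta. apply functional_extensionality; intro i.
    rewrite Nat.iter_succ_r. reflexivity. }
  rewrite !Hshift. pose proof (inv_succ_bounds n).
  pose proof (dO_tail (theta f P x n) (theta f P x' n)).
  pose proof (dPi_ge_term (theta f P x) (theta f P x') n).
  unfold Rdiv in *. nra.
Qed.

Lemma dPi_theta_lt_of_cells_agree e : 0 < e -> exists K, forall x x',
  (forall n i, (n <= K)%nat -> (i <= K)%nat ->
     cell (P n) (Nat.iter i f x') = cell (P n) (Nat.iter i f x)) ->
  dPi (theta f P x) (theta f P x') < e.
Proof.
  intro He. destruct (exists_inv_succ_lt e He) as [K HK].
  exists K. intros x x' Hag. eapply Rle_lt_trans; [|exact HK].
  apply dPi_le_of_agree. intros n i Hn Hi. symmetry. apply Hag; lia.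
Qed.

Lemma theta_continuous : mcontinuous d f ->
  forall x e, 0 < e -> exists dl, 0 < dl /\
  forall x', d x x' < dl -> dPi (theta f P x) (theta f P x') < e.
Proof.
  intros Hf x e He. destruct (dPi_theta_lt_of_cells_agree e He) as [K HK].
  destruct (exists_pos_forall_le2 (fun n i dl => forall x', d x x' < dl ->
              cell (P n) (Nat.iter i f x') = cell (P n) (Nat.iter i f x)) K)
    as [dl [Hdl Hcells]].
  - intros n i a b Hab H x' Hx'. apply H. lra.
  - intros n i _ _. apply (cell_comp_locally_constant (Hpart n)), iter_continuous, Hf.
  - exists dl; split; [exact Hdl|]. intros x' Hx'. apply HK. intros n i Hn Hi. apply Hcells; auto.
Qed.

Lemma theta_unif_continuous : tame d P -> unif_continuous d f ->
  forall e, 0 < e -> exists dl, 0 < dl /\ forall x x',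
    d x x' < dl -> dPi (theta f P x) (theta f P x') < e.
Proof.
  intros [_ Hsep] Huc e He. destruct (dPi_theta_lt_of_cells_agree e He) as [K HK].
  destruct (exists_pos_forall_le2 (fun n i dl => forall x x', d x x' < dl ->
              cell (P n) (Nat.iter i f x') = cell (P n) (Nat.iter i f x)) K)
    as [dl [Hdl Hcells]].
  - intros n i a b Hab H x x' Hx'. apply H. lra.
  - intros n i _ _. destruct (Hsep n) as [rho [Hrho Hrho_sep]].
    apply (cell_comp_unif_locally_constant (Hpart n) _ rho Hrho Hrho_sep).
    apply iter_unif_continuous, Huc.
  - exists dl; split; [exact Hdl|]. intros x x' Hx'. apply HK. intros n i Hn Hi.
    apply Hcells; auto.
Qed.

Lemma theta_inv_unif_continuous : tame d P ->
  forall e, 0 < e -> exists dl, 0 < dl /\ forall x x',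
    dPi (theta f P x) (theta f P x') < dl -> d x x' < e.
Proof.
  intros [Hdiam _] e He. destruct (Hdiam (e / 2)) as [N HN]; [lra|].
  exists (/ (INR N + 1)). split; [apply inv_succ_bounds|].
  intros x x' H. apply dPi_lt_inv_head in H.
  change (cell (P N) x = cell (P N) x') in H.
  assert (Hx' : cell (P N) x x') by (rewrite H; apply (cell_self (Hpart N))).
  pose proof (HN N (le_n N) _ (cell_in (Hpart N) x) x x' (cell_self (Hpart N) x) Hx').
  lra.
Qed.

Lemma unif_continuous_of_theta :
  (forall e, 0 < e -> exists dl, 0 < dl /\ forall x x',
     d x x' < dl -> dPi (theta f P x) (theta f P x') < e) ->
  (forall e, 0 < e -> exists dl, 0 < dl /\ forall x x',
     dPi (theta f P x) (theta f P x') < dl -> d x x' < e) ->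
  unif_continuous d f.
Proof.
  intros Htheta Hinv e He. destruct (Hinv e He) as [dl1 [Hdl1 H1]].
  destruct (Htheta (dl1 / 2)) as [dl2 [Hdl2 H2]]; [lra|].
  exists dl2; split; [exact Hdl2|]. intros x x' Hx. apply H1.
  pose proof (dPi_theta_shift x x'). pose proof (H2 x x' Hx). lra.
Qed.

Hypothesis Hd : is_metric d.
Hypothesis Hbasis : is_basis d (fun O => exists n, P n O).

Lemma exists_cell_sub_ball x r : 0 < r ->
  exists n, subset (cell (P n) x) (fun y => d x y < r).
Proof.
  destruct Hd as [_ [Hzero [_ Htri]]]. intro Hr.
  assert (Hopen : mopen d (fun y => d x y < r)).
  { intros y Hy. exists (r - d x y). split; [lra|].
    intros z Hz. pose proof (Htri x y z). lra. }
  assert (Hxx : d x x < r) by (rewrite (proj2 (Hzero x x) eq_refl); exact Hr).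
  destruct (proj2 Hbasis _ x Hopen Hxx) as [O [[n HO] [Hx Hsub]]].
  exists n. rewrite (cell_eq (Hpart n) O x HO Hx). exact Hsub.
Qed.

Lemma theta_injective x x' : theta f P x = theta f P x' -> x = x'.
Proof.
  destruct Hd as [Hpos [Hzero _]]. intro E.
  destruct (classic (x = x')) as [|Hne]; auto. exfalso.
  assert (Hdx : 0 < d x x').
  { destruct (Hpos x x') as [H|H]; auto. exfalso; apply Hne, Hzero; auto. }
  destruct (exists_cell_sub_ball x _ Hdx) as [n Hsub].
  assert (Ecell : cell (P n) x = cell (P n) x') by exact (f_equal (fun y => y n 0%nat) E).
  pose proof (Hsub x' ltac:(rewrite Ecell; apply (cell_self (Hpart n)))). lra.
Qed.

Lemma theta_inv_continuous x e : 0 < e -> exists dl, 0 < dl /\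
  forall x', dPi (theta f P x) (theta f P x') < dl -> d x x' < e.
Proof.
  intro He. destruct (exists_cell_sub_ball x e He) as [n Hsub].
  exists (/ (INR n + 1)). split; [apply inv_succ_bounds|].
  intros x' H. apply dPi_lt_inv_head in H.
  change (cell (P n) x = cell (P n) x') in H.
  apply Hsub. rewrite H. apply (cell_self (Hpart n)).
Qed.

(* x comes from completeness applied to the time-0 coordinates.  For the coordinate (n, i),
   take an orbit witness z at a level >= n fine enough that z lies in the ball around x on
   which cell (P n) o f^i is constant: then f^i z lies in both y n i and cell (P n) (f^i x). *)
Lemma theta_surjective : mcontinuous d f -> complete_seq P ->
  forall y, inv_limit f P y -> exists x, theta f P x = y.
Proof.
  intros Hf Hc y Hy. pose proof Hy as [Horb Hhook].
  destruct (Hc (fun n => y n 0%nat) (fun n => proj1 (Horb n) 0%nat)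
               (fun n => proj2 (Hhook n 0%nat))) as [x Hx].
  exists x. apply functional_extensionality; intro n.
  apply functional_extensionality; intro i. unfold theta.
  destruct (cell_comp_locally_constant (Hpart n) _ (iter_continuous d f Hf i) x)
    as [dl [Hdl Hloc]].
  destruct (exists_cell_sub_ball x dl Hdl) as [m Hsub].
  assert (Hym : y m 0%nat = cell (P m) x).
  { symmetry. apply (cell_eq (Hpart m)); [apply (proj1 (Horb m)) | apply Hx]. }
  destruct (proj2 (Horb (Nat.max m n)) i) as [z Hz].
  assert (Hzm : cell (P m) x z).
  { rewrite <- Hym. apply (inv_limit_antitone f P y Hy m (Nat.max m n) 0); [lia|].
    apply (Hz 0%nat); lia. }
  assert (Hzn : y n i (Nat.iter i f z)).
  { apply (inv_limit_antitone f P y Hy n (Nat.max m n) i); [lia|]. apply Hz; lia. }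
  rewrite <- (Hloc z (Hsub z Hzm)).
  apply (cell_eq (Hpart n)); [apply (proj1 (Horb n)) | exact Hzn].
Qed.

End Theta.

Theorem proposition4p12 (X : Type) (d : X -> X -> R) (f : X -> X)
  (P : nat -> (X -> Prop) -> Prop)
  (Xne : inhabited X) (Hd : is_metric d) (Hsep : separable d)
  (Hf : mcontinuous d f) (HP : defining_sequence d P) :
  (complete_seq P ->
     (* theta maps X into the inverse limit, and is a homeomorphism onto it *)
     (forall x, inv_limit f P (theta f P x)) /\
     (forall x x', theta f P x = theta f P x' -> x = x') /\
     (forall y, inv_limit f P y -> exists x, theta f P x = y) /\
     (forall x e, 0 < e -> exists dl, 0 < dl /\
        forall x', d x x' < dl -> dPi (theta f P x) (theta f P x') < e) /\
     (forall x e, 0 < e -> exists dl, 0 < dl /\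
        forall x', dPi (theta f P x) (theta f P x') < dl -> d x x' < e)) /\
  (complete_seq P -> tame d P ->
     (unif_continuous d f <->
       ((forall e, 0 < e -> exists dl, 0 < dl /\ forall x x',
            d x x' < dl -> dPi (theta f P x) (theta f P x') < e) /\
        (forall e, 0 < e -> exists dl, 0 < dl /\ forall x x',
            dPi (theta f P x) (theta f P x') < dl -> d x x' < e)))).
Proof.
  destruct HP as [Hpart [Href Hbasis]].
  split.
  - intro Hc. split; [|split; [|split; [|split]]].
    + exact (theta_inv_limit f Hpart Href).
    + exact (theta_injective f Hpart Hd Hbasis).
    + exact (theta_surjective f Hpart Hd Hbasis Hf Hc).
    + exact (theta_continuous f Hpart Hf).
    + exact (theta_inv_continuous f Hpart Hd Hbasis).
  - intros _ Htame. split.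
    + intro Huc. split.
      * exact (theta_unif_continuous f Hpart Htame Huc).
      * exact (theta_inv_unif_continuous f Hpart Htame).
    + intros [Htheta Hinv]. exact (unif_continuous_of_theta f Htheta Hinv).
Qed.
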